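(* Let $A\in\mathbb{R}^{m\times n}$ have full row rank, $c\in\mathbb{R}^m$, and fix a block size $\tau$ with $m+1\le\tau\le n$; let $\mathcal{B}$ be the set of all subsets $b\subseteq\{1,\dots,n\}$ with $|b|=\tau$. Consider $\min\{F(x):=f(x)+h(x): Ax=c\}$, where $f:\mathbb{R}^n\to\mathbb{R}$ is differentiable and $h(x)=\sum_i h_i(x_i)$ with each $h_i:\mathbb{R}\to\mathbb{R}\cup\{+\infty\}$ proper and convex. Assume there is $L_2>0$ such that for every $x$ with $Ax=c$, every $b\in\mathcal{B}$ and every $d$ with $\mathrm{supp}(d)\subseteq b$ and $Ad=0$, $\|\nabla_b f(x+d)-\nabla_bf(x)\|_2\le L_2\|d\|_2$. Let $F^*=\inf\{F(x):Ax=c\}$ and assume there is $\mu_2>0$ such that for all $x$ with $Ax=c$, $h(x)<\infty$, \[ -L_2\min_{d:\ Ad=0}\Big\{\nabla f(x)^\top d+\tfrac{L_2}{2}\|d\|_2^2+h(x+d)-h(x)\Big\}\ge\mu_2\,(F(x)-F^* ). \] Let $x^0$ satisfy $Ax^0=c$, $h(x^0)<\infty$, and set $x^{k+1}=x^k+d^k$ where $(b^k,d^k)$ minimizes $\nabla f(x^k)^\top d+\frac{L_2}{2}\|d\|_2^2+h(x^k+d)-h(x^k)$ over all $b\in\mathcal{B}$ and all $d$ with $\mathrm{supp}(d)\subseteq b$ and $Ad=0$ (the GS-q rule). Then for all $k\ge0$, \[ F(x^k)-F^*\le\Big(1-\frac{\mu_2}{L_2(n-\tau+1)}\Big)^k\big(F(x^0)-F^*\big).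 \]
   Context: $\mathrm{supp}(d)=\{i:d_i\ne0\}$; $\nabla_b f$ denotes the vector of partial derivatives of $f$ with indices in $b$. The displayed assumption on $\mu_2$ is the proximal-PL condition in the 2-norm, $\frac12\mathcal{D}(x,L_2)\ge\mu_2(F(x)-F^* )$ with $\mathcal{D}(x,L)=-2L\min_{d:Ad=0}\{\nabla f(x)^\top d+\frac L2\|d\|_2^2+h(x+d)-h(x)\}$. *)

From HB Require Import structures.
From mathcomp Require Import all_boot all_order all_algebra.
From mathcomp Require Import all_classical all_reals all_analysis.
Set Implicit Arguments. Unset Strict Implicit. Unset Printing Implicit Defensive.
Import Order.TTheory GRing.Theory Num.Theory.
Import numFieldNormedType.Exports.
Local Open Scope classical_set_scope.
Local Open Scope ring_scope.

Section Defs.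
Variable R : realType.

Definition norm2 (n : nat) (v : 'cV[R]_n) : R := Num.sqrt (\sum_i v i 0 ^+ 2).

Definition norm2_on (n : nat) (b : {set 'I_n}) (v : 'cV[R]_n) : R :=
  Num.sqrt (\sum_(i in b) v i 0 ^+ 2).

Definition grad (n : nat) (f : 'cV[R]_n -> R) (x : 'cV[R]_n) : 'cV[R]_n :=
  \col_i ('d f x (delta_mx i 0 : 'cV[R]_n)).

Definition dotv (n : nat) (u v : 'cV[R]_n) : R := \sum_i u i 0 * v i 0.

Definition supp_sub (n : nat) (d : 'cV[R]_n) (b : {set 'I_n}) : Prop :=
  forall i, d i 0 != 0 -> i \in b.

Definition econvex (g : R -> \bar R) : Prop :=
  forall (x y t : R), 0 < t < 1 ->
    (g (t * x + (1 - t) * y)%R <= t%:E * g x + (1 - t)%:E * g y)%E.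

Definition eproper (g : R -> \bar R) : Prop :=
  (forall x, g x != -oo)%E /\ (exists x, g x < +oo)%E.

Definition hsep (n : nat) (hi : 'I_n -> R -> \bar R) (x : 'cV[R]_n) : \bar R :=
  (\sum_(i < n) hi i (x i ord0))%E.

Definition Fobj (n : nat) (f : 'cV[R]_n -> R) (hi : 'I_n -> R -> \bar R)
  (x : 'cV[R]_n) : \bar R := ((f x)%:E + hsep hi x)%E.

Definition Fstar (m n : nat) (A : 'M[R]_(m, n)) (c : 'cV[R]_m)
  (f : 'cV[R]_n -> R) (hi : 'I_n -> R -> \bar R) : \bar R :=
  ereal_inf [set Fobj f hi x | x in [set x | A *m x = c]].

Definition Qmodel (n : nat) (f : 'cV[R]_n -> R) (hi : 'I_n -> R -> \bar R)
  (L : R) (x d : 'cV[R]_n) : \bar R :=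
  ((dotv (grad f x) d + L / 2 * norm2 d ^+ 2)%:E + hsep hi (x + d) - hsep hi x)%E.

End Defs.

(* One step of the GS-q rule decreases F by at least -q, where q <= 0 is the
   optimal value of the model over directions in ker A supported on tau
   coordinates: this is the descent lemma along the segment, using the block
   Lipschitz bound. Conversely, every d in ker A is a conformal sum (all
   summands having, coordinatewise, the signs of d) of at most n - tau + 1
   kernel vectors with at most tau nonzero entries: subtract from d the largest
   multiple of a kernel vector sign-conformal to d with small support, which
   exists because any m + 1 columns of A are dependent. As the model is
   superadditive on conformal pairs (each h_i is convex), its infimum over
   ker A is at least (n - tau + 1) q, and the proximal-PL inequality turns the
   decrease into the contraction factor 1 - mu / (L (n - tau + 1)). *)

From HB Require Import structures.
From mathcomp Require Import all_boot all_order all_algebra.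
From mathcomp Require Import all_classical all_reals all_analysis.
From mathcomp Require Import ring lra zify.
Import Order.TTheory GRing.Theory Num.Theory.
Import numFieldNormedType.Exports.
Local Open Scope ring_scope.
Set Implicit Arguments. Unset Strict Implicit. Unset Printing Implicit Defensive.

Lemma subset_of_card (T : finType) (B : {set T}) k :
  (k <= #|B|)%N -> exists2 A : {set T}, A \subset B & #|A| = k.
Proof.
rewrite -bin_gt0 -cards_draws => /card_gt0P[A].
by rewrite inE => /andP[sAB /eqP cA]; exists A.
Qed.

Lemma superset_of_card (T : finType) (S : {set T}) k :
  (#|S| <= k <= #|T|)%N -> exists2 B : {set T}, S \subset B & #|B| = k.
Proof.
case/andP=> Sk kT.
have [C sCS cC] : exists2 C : {set T}, C \subset ~: S & #|C| = (#|T| - k)%N.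
  by apply: subset_of_card; have := cardsC S; lia.
exists (~: C); first by rewrite finset.subsetC.
have := cardsC C; lia.
Qed.

Section ColumnVectors.
Variables (R : realType) (n : nat).
Implicit Types (u v y z : 'cV[R]_n) (B : {set 'I_n}).

Definition csupp v := [set i | v i 0 != 0].

Definition conformal y z := forall i, 0 <= y i 0 * z i 0.

Definition sconformal y z := forall i, y i 0 != 0 -> 0 < y i 0 * z i 0.

Lemma in_csupp v i : (i \in csupp v) = (v i 0 != 0).
Proof. by rewrite inE. Qed.

Lemma csuppZ k v : k != 0 -> csupp (k *: v) = csupp v.
Proof. by move=> k0; apply/setP => i; rewrite !in_csupp mxE mulf_eq0 negb_or k0. Qed.

Lemma card_csupp0 : #|csupp (0 : 'cV[R]_n)| = 0%N.
Proof. by apply: eq_card0 => i; rewrite in_csupp mxE eqxx. Qed.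

Lemma sconformal_refl v : sconformal v v.
Proof. by move=> i vi; rewrite -expr2 exprn_even_gt0 //= vi orbT. Qed.

Lemma supp_subE v B : supp_sub v B <-> csupp v \subset B.
Proof.
split=> [sB | /fintype.subsetP sB i vi]; last by apply: sB; rewrite in_csupp.
by apply/fintype.subsetP => i; rewrite in_csupp => /sB.
Qed.

Lemma sconformal_sub y z : sconformal y z -> csupp y \subset csupp z.
Proof.
move=> yz; apply/fintype.subsetP => i; rewrite !in_csupp => /yz.
by apply: contraTneq => ->; rewrite mulr0 ltxx.
Qed.

Lemma sconformal_eq0 y z i : sconformal y z -> z i 0 = 0 -> y i 0 = 0.
Proof.
move=> yz zi; apply/eqP; apply: contraT => /yz.
by rewrite zi mulr0 ltxx.
Qed.

Lemma sconformal_trans y z v : sconformal y z -> sconformal z v -> sconformal y v.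
Proof.
move=> yz zv i yi; have yzi := yz i yi.
have zi : z i 0 != 0 by apply: contraTneq yzi => ->; rewrite mulr0 ltxx.
have : 0 < (y i 0 * v i 0) * z i 0 ^+ 2.
  have -> : y i 0 * v i 0 * z i 0 ^+ 2 = (y i 0 * z i 0) * (z i 0 * v i 0) by ring.
  by rewrite mulr_gt0 ?zv.
by rewrite pmulr_lgt0 // exprn_even_gt0.
Qed.

Lemma norm2_sqr v : norm2 v ^+ 2 = \sum_i v i 0 ^+ 2.
Proof. by rewrite sqr_sqrtr // sumr_ge0 // => i _; rewrite sqr_ge0. Qed.

Lemma norm2_on_sqr B v : norm2_on B v ^+ 2 = \sum_(i in B) v i 0 ^+ 2.
Proof. by rewrite sqr_sqrtr // sumr_ge0 // => i _; rewrite sqr_ge0. Qed.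

Lemma norm2_ge0 v : 0 <= norm2 v.
Proof. exact: sqrtr_ge0. Qed.

Lemma norm2_on_ge0 B v : 0 <= norm2_on B v.
Proof. exact: sqrtr_ge0. Qed.

Lemma norm20 : norm2 (0 : 'cV[R]_n) = 0.
Proof. by rewrite /norm2 big1 ?sqrtr0 // => i _; rewrite mxE expr0n. Qed.

Lemma norm2Z k v : 0 <= k -> norm2 (k *: v) = k * norm2 v.
Proof.
move=> k0; rewrite /norm2 -[k in k * _]ger0_norm // -sqrtr_sqr -sqrtrM ?sqr_ge0 //.
by rewrite mulr_sumr; congr Num.sqrt; apply: eq_bigr => i _; rewrite mxE exprMn.
Qed.

Lemma norm2D_conformal y z :
  conformal y z -> norm2 y ^+ 2 + norm2 z ^+ 2 <= norm2 (y + z) ^+ 2.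
Proof.
move=> yz; rewrite !norm2_sqr -big_split /=; apply: ler_sum => i _.
by rewrite mxE sqrrD -addrA lerD2l lerDr mulr2n; have := yz i; lra.
Qed.

Lemma dotv0r u : dotv u 0 = 0.
Proof. by rewrite /dotv big1 // => i _; rewrite mxE mulr0. Qed.

Lemma dotvDr u y z : dotv u (y + z) = dotv u y + dotv u z.
Proof. by rewrite /dotv -big_split; apply: eq_bigr => i _; rewrite mxE mulrDr. Qed.

Lemma dotvBl u v z : dotv (u - v) z = dotv u z - dotv v z.
Proof. by rewrite /dotv -sumrB; apply: eq_bigr => i _; rewrite !mxE mulrBl. Qed.

(* AM-GM coordinatewise: [g_i d_i <= g_i^2 / (2M) + M d_i^2 / 2]. *)
Lemma dotv_le_on B (g d : 'cV[R]_n) M :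
  0 < M -> supp_sub d B -> norm2_on B g <= M * norm2 d ->
  dotv g d <= M * norm2 d ^+ 2.
Proof.
move=> M0 sdB gd.
have gd2 : \sum_(i in B) g i 0 ^+ 2 <= M ^+ 2 * \sum_i d i 0 ^+ 2.
  rewrite -norm2_on_sqr -norm2_sqr -exprMn ler_sqr ?nnegrE //.
    exact: norm2_on_ge0.
  by rewrite mulr_ge0 ?norm2_ge0 ?ltW.
have dB : \sum_(i in B) d i 0 ^+ 2 <= \sum_i d i 0 ^+ 2.
  rewrite [X in _ <= X](bigID (mem B)) /= lerDl sumr_ge0 // => i _.
  exact: sqr_ge0.
have -> : dotv g d = \sum_(i in B) g i 0 * d i 0.
  rewrite /dotv [RHS]big_mkcond /=; apply: eq_bigr => i _.
  case: ifP => // iB; have : ~~ (d i 0 != 0) by apply/negP => /sdB; rewrite iB.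
  by rewrite negbK => /eqP ->; rewrite mulr0.
apply: (@le_trans _ _ (\sum_(i in B) (g i 0 ^+ 2 / (2 * M) + M / 2 * d i 0 ^+ 2))).
  apply: ler_sum => i _; rewrite -subr_ge0.
  have -> : g i 0 ^+ 2 / (2 * M) + M / 2 * d i 0 ^+ 2 - g i 0 * d i 0 =
            (g i 0 - M * d i 0) ^+ 2 / (2 * M) by field; rewrite gt_eqF.
  by rewrite divr_ge0 ?sqr_ge0 // mulr_ge0 // ltW.
rewrite big_split /= -mulr_suml -mulr_sumr norm2_sqr.
have : (\sum_(i in B) g i 0 ^+ 2) / (2 * M) <= M / 2 * \sum_i d i 0 ^+ 2.
  rewrite ler_pdivrMr ?mulr_gt0 //; apply: (le_trans gd2).
  by rewrite le_eqVlt; apply/orP; left; apply/eqP; field.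
have : M / 2 * \sum_(i in B) d i 0 ^+ 2 <= M / 2 * \sum_i d i 0 ^+ 2.
  by rewrite ler_pM2l // divr_gt0.
lra.
Qed.

End ColumnVectors.

Section ConformalDecomposition.
Variables (R : realType) (m n : nat) (A : 'M[R]_(m, n)).
Implicit Types (u v d e y : 'cV[R]_n).

Lemma ker_supported_in (T : {set 'I_n}) :
  (m < #|T|)%N -> exists2 u, u != 0 & A *m u = 0 /\ csupp u \subset T.
Proof.
move=> mT.
pose E : 'M[R]_(#|T|, n) := \matrix_(j, i) (i == enum_val j)%:R.
pose K := E *m A^T.
have : kermx K != 0.
  by rewrite -mxrank_eq0 mxrank_ker -lt0n subn_gt0 (leq_ltn_trans (rank_leq_col K)).
case/matrix0Pn => i [j kij].
pose w := row i (kermx K).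
have wj : w 0 j != 0 by rewrite mxE.
have wK : w *m K = 0 by rewrite /w -row_mul mulmx_ker row0.
have uE k : (w *m E)^T k 0 = \sum_l w 0 l * (k == enum_val l)%:R.
  by rewrite !mxE; apply: eq_bigr => l _; rewrite !mxE.
exists (w *m E)^T; last split.
- apply/cV0Pn; exists (enum_val j); rewrite uE (bigD1 j) //= eqxx mulr1.
  rewrite big1 ?addr0 // => l lj.
  by rewrite (inj_eq enum_val_inj) eq_sym (negbTE lj) mulr0.
- have -> : A *m (w *m E)^T = (w *m K)^T by rewrite !trmx_mul trmxK mulmxA.
  by rewrite wK trmx0.
- apply/fintype.subsetP => k; rewrite in_csupp uE; apply: contraNT => kT.
  apply/eqP/big1 => l _; have [ekl|] := eqVneq k (enum_val l); last by rewrite mulr0.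
  by move: kT; rewrite ekl enum_valP.
Qed.

(* [t] is the minimum of [d_i / u_i] over the coordinates where [u] and [d]
   have the same sign. *)
Lemma ratio_test u d i0 : 0 < u i0 0 * d i0 0 ->
  exists t j, [/\ 0 < t, d j 0 != 0, d j 0 = t * u j 0 &
    forall i, 0 < u i 0 * d i 0 ->
      0 <= u i 0 * (d i 0 - t * u i 0) /\ 0 <= d i 0 * (d i 0 - t * u i 0)].
Proof.
move=> ud0.
have [j udj jmin] := arg_minP (P := fun i => 0 < u i 0 * d i 0) (fun i => d i 0 / u i 0) ud0.
have nz i : 0 < u i 0 * d i 0 -> u i 0 != 0 /\ d i 0 != 0.
  by move=> udi; apply/andP; rewrite -negb_or -mulf_eq0 gt_eqF.
have [uj dj] := nz j udj.
have t0 : 0 < d j 0 / u j 0.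
  have -> : d j 0 / u j 0 = (u j 0 * d j 0) / u j 0 ^+ 2 by field.
  by rewrite divr_gt0 // exprn_even_gt0 //= uj orbT.
exists (d j 0 / u j 0), j; split => //.
- by rewrite divfK.
- move=> i udi; have [ui di] := nz i udi.
  have ti : 0 <= d i 0 / u i 0 - d j 0 / u j 0 by rewrite subr_ge0 jmin.
  have -> : u i 0 * (d i 0 - d j 0 / u j 0 * u i 0) =
            u i 0 ^+ 2 * (d i 0 / u i 0 - d j 0 / u j 0) by field; rewrite uj ui.
  have -> : d i 0 * (d i 0 - d j 0 / u j 0 * u i 0) =
            (u i 0 * d i 0) * (d i 0 / u i 0 - d j 0 / u j 0) by field; rewrite uj ui.
  by split; apply: mulr_ge0 => //; [exact: sqr_ge0 | exact: ltW].
Qed.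

Lemma ker_sconformal_shrink tau d :
  (m < tau)%N -> A *m d = 0 -> (tau < #|csupp d|)%N ->
  exists2 d', A *m d' = 0 & [/\ d' != 0, sconformal d' d & (#|csupp d'| < #|csupp d|)%N].
Proof.
move=> mt Ad big.
have [T Td cT] := @subset_of_card _ (csupp d) m.+1 (ltnW (leq_ltn_trans mt big)).
have [u0 u0n [Au0 u0T]] : exists2 u0, u0 != 0 & A *m u0 = 0 /\ csupp u0 \subset T.
  by apply: ker_supported_in; rewrite cT.
have /cV0Pn[i0 ui0] := u0n.
have ud i : u0 i 0 != 0 -> d i 0 != 0.
  by move=> ui; rewrite -in_csupp (fintype.subsetP Td) // (fintype.subsetP u0T) ?in_csupp.
have [u Au [uT ud0]] : exists2 u, A *m u = 0 &
    csupp u \subset T /\ 0 < u i0 0 * d i0 0.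
  have [pos|neg] := ltP 0 (u0 i0 0 * d i0 0); first by exists u0.
  exists (- u0); first by rewrite mulmxN Au0 oppr0.
  rewrite -scaleN1r csuppZ ?oppr_eq0 ?oner_eq0 //; split => //.
  by rewrite !mxE mulN1r mulNr oppr_gt0 lt_neqAle neg mulf_neq0 ?ud.
have uS i : d i 0 = 0 -> u i 0 = 0.
  move=> di; apply/eqP; rewrite -[_ == 0]negbK -in_csupp.
  by apply/negP => /(fintype.subsetP uT)/(fintype.subsetP Td); rewrite in_csupp di eqxx.
have [t [j [t0 dj djt tu]]] := ratio_test ud0.
have d'E i : (d - t *: u) i 0 = d i 0 - t * u i 0 by rewrite !mxE.
have d'd : sconformal (d - t *: u) d.
  move=> i; rewrite d'E => d'i.
  have di : d i 0 != 0 by apply: contra_neq d'i => di; rewrite di uS // mulr0 subr0.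
  rewrite lt_def mulf_neq0 //= mulrC.
  have [/tu[] // | udi] := ltP 0 (u i 0 * d i 0).
  rewrite mulrBr -expr2 subr_ge0 mulrCA (le_trans _ (sqr_ge0 _)) //.
  by rewrite pmulr_rle0 // mulrC.
exists (d - t *: u); first by rewrite mulmxBr -scalemxAr Au scaler0 subr0.
split => //.
- apply: contraTneq big => /eqP; rewrite subr_eq0 => /eqP ->.
  by rewrite -leqNgt csuppZ ?gt_eqF // (leq_trans (subset_leq_card uT)) // cT.
- apply: proper_card; apply/properP; split; first exact: sconformal_sub.
  by exists j; rewrite !in_csupp // d'E -djt subrr eqxx.
Qed.

Lemma ker_sconformal_small tau d :
  (m < tau)%N -> A *m d = 0 -> d != 0 ->
  exists2 e, A *m e = 0 & [/\ e != 0, sconformal e d & (#|csupp e| <= tau)%N].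
Proof.
move=> mt; have [k] := ubnP #|csupp d|; elim: k d => // k IH d sdk Ad d0.
have [small|big] := leqP #|csupp d| tau.
  by exists d => //; split => //; exact: sconformal_refl.
have [d' Ad' [d'0 d'd lt]] := ker_sconformal_shrink mt Ad big.
have [e Ae [e0 ed' se]] := IH d' (leq_trans lt sdk) Ad' d'0.
by exists e => //; split => //; exact: sconformal_trans ed' d'd.
Qed.

Lemma ker_conformal_peel tau d :
  (m < tau)%N -> A *m d = 0 -> (tau < #|csupp d|)%N ->
  exists2 y, A *m y = 0 &
    [/\ (#|csupp y| <= tau)%N, conformal y (d - y) & (#|csupp (d - y)| < #|csupp d|)%N].
Proof.
move=> mt Ad big.
have d0 : d != 0 by apply: contraTneq big => ->; rewrite card_csupp0.
have [e Ae [e0 ed se]] := ker_sconformal_small mt Ad d0.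
have /cV0Pn[i0 ei0] := e0.
have [t [j [t0 dj djt te]]] := ratio_test (ed i0 ei0).
have yE i : (d - t *: e) i 0 = d i 0 - t * e i 0 by rewrite !mxE.
exists (t *: e); first by rewrite -scalemxAr Ae scaler0.
split; first by rewrite csuppZ ?gt_eqF.
- move=> i; rewrite yE mxE.
  have [ei|ei] := eqVneq (e i 0) 0; first by rewrite ei !mulr0 mul0r.
  by rewrite -mulrA; apply: mulr_ge0; [exact: ltW | case: (te i (ed i ei))].
- apply: proper_card; apply/properP; split.
    apply/fintype.subsetP => i; rewrite !in_csupp yE; apply: contra_neq => di.
    by rewrite di (sconformal_eq0 ed di) mulr0 subr0.
  by exists j; rewrite !in_csupp // yE -djt subrr eqxx.
Qed.

Lemma ker_conformal_bound tau (phi : 'cV[R]_n -> \bar R) (q : R) :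
  (m < tau)%N -> q <= 0 ->
  (forall y z, conformal y z -> (phi y + phi z <= phi (y + z)%R)%E) ->
  (forall y, A *m y = 0 -> (#|csupp y| <= tau)%N -> (q%:E <= phi y)%E) ->
  forall d, A *m d = 0 -> ((((n - tau).+1)%:R * q)%:E <= phi d)%E.
Proof.
move=> mt q0 phiD phi_small.
suff bound d : A *m d = 0 -> ((((#|csupp d| - tau).+1)%:R * q)%:E <= phi d)%E.
  move=> d Ad; apply: le_trans (bound d Ad); rewrite lee_fin ler_wnM2r // ler_nat.
  by rewrite ltnS leq_sub2r // (leq_trans (max_card _)) ?card_ord.
have [k] := ubnP #|csupp d|; elim: k d => // k IH d sdk Ad.
have [small|big] := leqP #|csupp d| tau.
  by move: (small); rewrite -subn_eq0 => /eqP ->; rewrite mulr1n mul1r; exact: phi_small.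
have [y Ay [sy yz lt]] := ker_conformal_peel mt Ad big.
have Az : A *m (d - y) = 0 by rewrite mulmxBr Ad Ay subr0.
have := phiD _ _ yz; rewrite subrKC; apply: le_trans.
apply: le_trans (leeD (phi_small y Ay sy) (IH _ (leq_trans lt sdk) Az)).
rewrite -EFinD lee_fin -[X in _ <= X + _]mul1r -mulrDl ler_wnM2r //.
by rewrite addrC natr1 ler_nat; lia.
Qed.

End ConformalDecomposition.

Section SeparableConvex.
Variable R : realType.

(* [a + b] and [a + c] are the convex combinations of [a + b + c] and [a] with
   weights [t = b / (b + c)] and [1 - t]. *)
Lemma econvex_shift_le (g : R -> \bar R) (a b c : R) :
  eproper g -> econvex g -> 0 < b * c ->
  (g (a + b)%R + g (a + c)%R <= g (a + b + c)%R + g a)%E.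
Proof.
move=> [gN _] gc bc.
have [->|gx] := eqVneq (g (a + b + c)) +oo%E; first by rewrite addye ?gN ?leey.
have [->|ga] := eqVneq (g a) +oo%E; first by rewrite addey ?gN ?leey.
have s2 : 0 < (b + c) ^+ 2 by nra.
have s0 : b + c != 0 by rewrite -(sqrf_eq0 (b + c)) gt_eqF.
pose t := b / (b + c).
have t01 : 0 < t < 1.
  have -> : t = b * (b + c) / (b + c) ^+ 2 by rewrite /t; field.
  have [p1 p2] : 0 < b * (b + c) /\ 0 < c * (b + c) by split; nra.
  rewrite divr_gt0 //= -subr_gt0.
  by rewrite (_ : 1 - _ = c * (b + c) / (b + c) ^+ 2) ?divr_gt0 //; field.
have t01' : 0 < 1 - t < 1 by case/andP: t01 => ? ?; apply/andP; split; lra.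
have := gc (a + b + c) a t t01; have := gc (a + b + c) a (1 - t) t01'.
rewrite (_ : t * _ + _ = a + b); last by rewrite /t; field.
rewrite (_ : (1 - t) * _ + _ = a + c); last by rewrite /t; field.
have fx : g (a + b + c) \is a fin_num by rewrite fin_numE gN gx.
have fa : g a \is a fin_num by rewrite fin_numE gN ga.
move=> h2 h1; apply: le_trans (leeD h1 h2) _.
rewrite -(fineK fx) -(fineK fa) -!EFinM -!EFinD lee_fin.
by rewrite le_eqVlt; apply/orP; left; apply/eqP; ring.
Qed.

Lemma hsep_neqNy n (hi : 'I_n -> R -> \bar R) (x : 'cV[R]_n) :
  (forall i, eproper (hi i)) -> hsep hi x != -oo%E.
Proof.
move=> hp; rewrite /hsep; elim/big_ind: _ => // [[a| |] [b| |] //|i _].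
by case: (hp i).
Qed.

Lemma hsep_conformal_le n (hi : 'I_n -> R -> \bar R) (x y z : 'cV[R]_n) :
  (forall i, eproper (hi i) /\ econvex (hi i)) -> conformal y z ->
  (hsep hi (x + y) + hsep hi (x + z) <= hsep hi (x + y + z) + hsep hi x)%E.
Proof.
move=> hp yz; rewrite /hsep -!big_split /=; apply: lee_sum => i _; rewrite !mxE.
have [->|y0] := eqVneq (y i 0) 0; first by rewrite !addr0 addeC.
have [->|z0] := eqVneq (z i 0) 0; first by rewrite !addr0.
by case: (hp i) => ??; apply: econvex_shift_le; rewrite // lt_def yz mulf_neq0.
Qed.

Lemma lee_shifted_add (Hy Hz Hyz : \bar R) (h ly lz lyz : R) :
  Hy != -oo%E -> Hz != -oo%E -> Hyz != -oo%E ->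
  (Hy + Hz <= Hyz + h%:E)%E -> ly + lz <= lyz ->
  ((ly%:E + Hy - h%:E) + (lz%:E + Hz - h%:E) <= lyz%:E + Hyz - h%:E)%E.
Proof.
move=> Hy0 Hz0; case: Hyz => [c| |] // _; last by move=> *; rewrite /= leey.
case: Hy Hy0 => [a| |] // _; case: Hz Hz0 => [b| |] // _ /=.
by rewrite -!EFinD !lee_fin => *; lra.
Qed.

Lemma Qmodel_conformal_superadditive n (f : 'cV[R]_n -> R) (hi : 'I_n -> R -> \bar R)
    (L : R) (x y z : 'cV[R]_n) :
  (forall i, eproper (hi i) /\ econvex (hi i)) -> hsep hi x \is a fin_num -> 0 <= L ->
  conformal y z -> (Qmodel f hi L x y + Qmodel f hi L x z <= Qmodel f hi L x (y + z))%E.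
Proof.
move=> hp hx L0 yz; have hN i : eproper (hi i) by case: (hp i).
rewrite /Qmodel -(fineK hx); apply: lee_shifted_add; rewrite ?hsep_neqNy //.
  by rewrite fineK // addrA; exact: hsep_conformal_le.
rewrite dotvDr -addrACA lerD2l -mulrDr ler_wpM2l ?divr_ge0 //.
exact: norm2D_conformal.
Qed.

End SeparableConvex.

Section BlockDescent.
Variables (R : realType) (n : nat) (f : 'cV[R]_n -> R).
Hypothesis df : forall z, differentiable f z.

Lemma dotv_gradE z v : dotv (grad f z) v = 'd f z v.
Proof.
rewrite {2}(matrix_sum_delta v) linear_sum /dotv; apply: eq_bigr => i _.
by rewrite big_ord1 linearZ /= mxE mulrC.
Qed.

Lemma is_derive_line (x d : 'cV[R]_n) (t : R) :
  is_derive t 1 (fun s : R => f (x + s *: d)) (dotv (grad f (x + t *: d)) d).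
Proof.
pose g := cst x + ( *:%R ^~ d) : R -> 'cV[R]_n.
have dg : is_diff t g (cst 0 + ( *:%R ^~ d)) by exact: is_diffD.
have gd : differentiable g t by case: dg.
have dfg : differentiable (f \o g) t by exact: differentiable_comp.
apply: DeriveDef; first exact: diff_derivable.
rewrite deriveE // diff_comp //.
by rewrite /= diff_val /= add0r scale1r dotv_gradE.
Qed.

Lemma block_descent L (x d : 'cV[R]_n) (B : {set 'I_n}) :
  0 < L -> supp_sub d B ->
  (forall s, 0 < s < 1 -> norm2_on B (grad f (x + s *: d) - grad f x) <= L * norm2 (s *: d)) ->
  f (x + d) <= f x + dotv (grad f x) d + L / 2 * norm2 d ^+ 2.
Proof.
move=> L0 sdB lip.
set a := dotv (grad f x) d; set S := norm2 d ^+ 2.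
pose psi (s : R) := f (x + s *: d) - a * s - L / 2 * S * s ^+ 2.
pose psi' (s : R) := dotv (grad f (x + s *: d)) d - a - L * S * s.
have dpsi (s : R) : is_derive s 1 psi (psi' s).
  have -> : psi = (fun s => f (x + s *: d)) - a *: id - (L / 2 * S) *: (id ^+ 2).
    by apply: funext => r.
  apply: is_derive_eq; first by apply: is_deriveB; first apply: is_deriveB; exact: is_derive_line.
  by rewrite /psi' /= expr1 /GRing.scale /=; field.
have psi'_le0 (s : R) : 0 < s < 1 -> psi' s <= 0.
  case/andP=> s0 s1; rewrite /psi' /a -dotvBl subr_le0.
  rewrite (_ : L * S * s = L * s * norm2 d ^+ 2); last by rewrite /S; ring.
  apply: dotv_le_on sdB _; first exact: mulr_gt0.
  by rewrite -mulrA -(norm2Z _ (ltW s0)); apply: lip; rewrite s0.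
have : psi 1 <= psi 0.
  apply: (@ler0_derive1_le_cc _ psi 0 1) => //; rewrite ?in_itv /= ?ler01 ?lexx //.
  - by move=> s; rewrite in_itv /= derive1E derive_val; exact: psi'_le0.
  - apply: continuous_subspaceT => s; apply: differentiable_continuous.
    by apply/derivable1_diffP; case: (dpsi s).
rewrite /psi scale1r scale0r addr0 expr1n expr0n /= !mulr1 !mulr0 !subr0.
lra.
Qed.

End BlockDescent.

Lemma geometric_decay (R : realDomainType) (e : nat -> R) (r : R) :
  (forall k, 0 <= e k) -> (forall k, e k.+1 <= r * e k) ->
  forall k, e k <= r ^+ k * e 0%N.
Proof.
move=> e0 er; have [r0|r0] := leP 0 r.
  elim=> [|k IH]; first by rewrite mul1r.
  by apply: le_trans (er k) _; rewrite exprS -mulrA ler_wpM2l.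
have e00 : e 0%N = 0.
  by apply/eqP; rewrite eq_le e0 andbT -(nmulr_rge0 _ r0) (le_trans (e0 1%N)).
case=> [|k]; first by rewrite mul1r.
by rewrite e00 mulr0; apply: le_trans (er k) _; rewrite nmulr_rle0.
Qed.

Lemma descent_contraction (R : realFieldType) (F F' fs q mu L N : R) :
  0 < mu -> 0 < L -> 0 < N -> F' <= F + q -> mu * (F - fs) <= - L * (N * q) ->
  F' - fs <= (1 - mu / (L * N)) * (F - fs).
Proof.
move=> mu0 L0 N0 dec PL; have LN : 0 < L * N by rewrite mulr_gt0.
have : q <= - (mu / (L * N)) * (F - fs).
  rewrite -(ler_pM2r LN) (_ : q * _ = - (- L * (N * q))); last by ring.
  rewrite (_ : _ * _ * _ = - (mu * (F - fs))) ?lerN2 //.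
  by field; rewrite !gt_eqF.
by rewrite mulrBl mul1r mulNr in dec *; lra.
Qed.

Section ObjectiveFacts.
Variables (R : realType) (n : nat) (f : 'cV[R]_n -> R) (hi : 'I_n -> R -> \bar R).
Local Open Scope ereal_scope.

Lemma Fobj_fin z : hsep hi z \is a fin_num -> Fobj f hi z \is a fin_num.
Proof. by move=> hz; rewrite fin_numD. Qed.

Lemma Fstar_le_Fobj m (A : 'M[R]_(m, n)) c z : A *m z = c -> Fstar A c f hi <= Fobj f hi z.
Proof. by move=> Az; apply: ereal_inf_lbound; exists z. Qed.

Lemma Qmodel0 L z : hsep hi z \is a fin_num -> Qmodel f hi L z 0 = 0.
Proof.
move=> hz; rewrite /Qmodel dotv0r norm20 addr0 expr0n /= mulr0 addr0.
by rewrite add0e subee.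
Qed.

Lemma Fobj_le_model L z d : hsep hi z \is a fin_num ->
  (f (z + d) <= f z + dotv (grad f z) d + L / 2 * norm2 d ^+ 2)%R ->
  Fobj f hi (z + d) <= Fobj f hi z + Qmodel f hi L z d.
Proof.
rewrite /Fobj /Qmodel => hz; rewrite -(fineK hz).
case: (hsep hi (z + d)) => [a| |] /= fd; last by rewrite leNye.
  by rewrite -!EFinD lee_fin; lra.
by rewrite leey.
Qed.

End ObjectiveFacts.

Section GaussSouthwellQ.
Variables (R : realType) (m n tau : nat) (A : 'M[R]_(m, n)) (c : 'cV[R]_m)
  (f : 'cV[R]_n -> R) (hi : 'I_n -> R -> \bar R) (L mu : R).
Hypotheses (mt : (m < tau)%N) (tn : (tau <= n)%N).
Hypothesis df : forall z, differentiable f z.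
Hypothesis hconv : forall i, eproper (hi i) /\ econvex (hi i).
Hypothesis L0 : 0 < L.
Hypothesis lip : forall z, A *m z = c -> forall bb : {set 'I_n}, #|bb| = tau ->
  forall dd, supp_sub dd bb -> A *m dd = 0 ->
  norm2_on bb (grad f (z + dd) - grad f z) <= L * norm2 dd.
Hypothesis mu0 : 0 < mu.
Hypothesis PL : forall z, A *m z = c -> (hsep hi z < +oo)%E ->
  (mu%:E * (Fobj f hi z - Fstar A c f hi)
    <= (- L)%:E * ereal_inf [set Qmodel f hi L z dd | dd in [set dd | (A *m dd = 0)%R]]%classic)%E.

Definition gsq_direction (z : 'cV[R]_n) (bk : {set 'I_n}) (dk : 'cV[R]_n) : Prop :=
  #|bk| = tau /\ supp_sub dk bk /\ A *m dk = 0 /\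
  forall (bb : {set 'I_n}) dd, #|bb| = tau -> supp_sub dd bb -> A *m dd = 0 ->
    (Qmodel f hi L z dk <= Qmodel f hi L z dd)%E.

Lemma gsq_model_fin z bk dk : hsep hi z \is a fin_num -> gsq_direction z bk dk ->
  Qmodel f hi L z dk \is a fin_num /\ fine (Qmodel f hi L z dk) <= 0.
Proof.
move=> hz [_ [_ [_ opt]]].
have [B0 _ cB0] : exists2 B : {set 'I_n}, B \subset finset.setT & #|B| = tau.
  by apply: subset_of_card; rewrite cardsT card_ord.
have Qle0 : (Qmodel f hi L z dk <= 0)%E.
  rewrite -(Qmodel0 f L hz); apply: (opt B0) => //; last by rewrite mulmx0.
  by apply/supp_subE/fintype.subsetP => i; rewrite in_csupp mxE eqxx.
have QNy : Qmodel f hi L z dk != -oo%E.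
  have : hsep hi (z + dk) != -oo%E by apply: hsep_neqNy => i; case: (hconv i).
  by rewrite /Qmodel -(fineK hz); case: (hsep hi (z + dk)).
split; last exact: fine_le0.
by rewrite fin_numE QNy -ltey (le_lt_trans Qle0) ?ltry.
Qed.

Lemma gsq_next_fin z bk dk : hsep hi z \is a fin_num -> gsq_direction z bk dk ->
  hsep hi (z + dk) \is a fin_num.
Proof.
move=> hz dir; have [Qfin _] := gsq_model_fin hz dir.
rewrite fin_numE hsep_neqNy /=; last by move=> i; case: (hconv i).
by apply: contraTneq Qfin => hinf; rewrite /Qmodel hinf -(fineK hz).
Qed.

Lemma gsq_descent z bk dk :
  A *m z = c -> hsep hi z \is a fin_num -> gsq_direction z bk dk ->
  (Fobj f hi (z + dk) <= Fobj f hi z + Qmodel f hi L z dk)%E.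
Proof.
move=> Az hz [cb [sdk [Adk _]]]; apply: Fobj_le_model hz _.
apply: (block_descent df L0 sdk) => s /andP[s0 _]; apply: lip => //.
  by apply/supp_subE; rewrite csuppZ ?lt0r_neq0 //; exact/supp_subE.
by rewrite -scalemxAr Adk scaler0.
Qed.

Lemma gsq_model_bound z bk dk dd :
  hsep hi z \is a fin_num -> gsq_direction z bk dk -> A *m dd = 0 ->
  ((((n - tau).+1)%:R * fine (Qmodel f hi L z dk))%:E <= Qmodel f hi L z dd)%E.
Proof.
move=> hz dir; have [_ [_ [_ opt]]] := dir; have [Qfin Qle0] := gsq_model_fin hz dir.
apply: (ker_conformal_bound (phi := Qmodel f hi L z) mt Qle0).
  by move=> y y' yy'; apply: Qmodel_conformal_superadditive => //; exact: ltW.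
move=> y Ay sy; rewrite fineK //.
have [B sB cB] : exists2 B : {set 'I_n}, csupp y \subset B & #|B| = tau.
  by apply: superset_of_card; rewrite sy card_ord.
by apply: opt cB _ Ay; exact/supp_subE.
Qed.

Lemma gsq_PL z bk dk :
  A *m z = c -> hsep hi z \is a fin_num -> gsq_direction z bk dk ->
  (mu%:E * (Fobj f hi z - Fstar A c f hi)
    <= ((- L) * (((n - tau).+1)%:R * fine (Qmodel f hi L z dk)))%:E)%E.
Proof.
move=> Az hz dir; apply: le_trans (PL Az _) _; first by rewrite ltey_eq hz.
rewrite EFinM EFinN !mulNe leeN2; apply: lee_wpmul2l; first by rewrite lee_fin ltW.
by apply: le_ereal_inf_tmp => _ [dd Add <-]; exact: gsq_model_bound dir Add.
Qed.

Lemma gsq_step z bk dk :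
  A *m z = c -> hsep hi z \is a fin_num -> gsq_direction z bk dk ->
  [/\ A *m (z + dk) = c, hsep hi (z + dk) \is a fin_num, Fstar A c f hi \is a fin_num &
    fine (Fobj f hi (z + dk)) - fine (Fstar A c f hi)
      <= (1 - mu / (L * ((n - tau).+1)%:R)) * (fine (Fobj f hi z) - fine (Fstar A c f hi))].
Proof.
move=> Az hz dir; have [_ [_ [Adk _]]] := dir.
have [Qfin _] := gsq_model_fin hz dir.
have hz' := gsq_next_fin hz dir.
have dec := gsq_descent Az hz dir; have PLz := gsq_PL Az hz dir.
have Fs_fin : Fstar A c f hi \is a fin_num.
  rewrite fin_numE; apply/andP; split.
    apply: contraTneq PLz => ->; rewrite -(fineK (Fobj_fin f hz)) /=.
    by rewrite mulry gtr0_sg // mul1e leye_eq.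
  have := Fstar_le_Fobj f hi Az; apply: contraTneq => ->.
  by rewrite -(fineK (Fobj_fin f hz)) leye_eq.
split => //; first by rewrite mulmxDr Az Adk addr0.
move: dec PLz; rewrite -(fineK Qfin) -(fineK (Fobj_fin f hz)) -(fineK (Fobj_fin f hz')).
rewrite -(fineK Fs_fin) /= -EFinD -EFinB -EFinM !lee_fin; exact: descent_contraction.
Qed.

End GaussSouthwellQ.

Local Open Scope classical_set_scope.

Theorem propositionD2 (R : realType) (m n tau : nat)
  (A : 'M[R]_(m, n)) (c : 'cV[R]_m)
  (f : 'cV[R]_n -> R) (hi : 'I_n -> R -> \bar R) (L2 mu2 : R)
  (x : nat -> 'cV[R]_n) (b : nat -> {set 'I_n}) (d : nat -> 'cV[R]_n) :
  \rank A = m ->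
  (m.+1 <= tau <= n)%N ->
  (forall z, differentiable f z) ->
  (forall i, eproper (hi i) /\ econvex (hi i)) ->
  0 < L2 ->
  (forall z, A *m z = c -> forall bb : {set 'I_n}, #|bb| = tau ->
     forall dd, supp_sub dd bb -> A *m dd = 0 ->
     norm2_on bb (grad f (z + dd) - grad f z) <= L2 * norm2 dd) ->
  0 < mu2 ->
  (forall z, A *m z = c -> (hsep hi z < +oo)%E ->
     (mu2%:E * (Fobj f hi z - Fstar A c f hi)
       <= (- L2)%:E * ereal_inf [set Qmodel f hi L2 z dd | dd in [set dd | (A *m dd = 0)%R]])%E) ->
  A *m x 0%N = c ->
  (hsep hi (x 0%N) < +oo)%E ->
  (forall k, x k.+1 = x k + d k) ->
  (forall k, #|b k| = tau /\ supp_sub (d k) (b k) /\ A *m d k = 0 /\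
     forall (bb : {set 'I_n}) dd, #|bb| = tau -> supp_sub dd bb -> A *m dd = 0 ->
       (Qmodel f hi L2 (x k) (d k) <= Qmodel f hi L2 (x k) dd)%E) ->
  forall k,
    (Fobj f hi (x k) - Fstar A c f hi
      <= ((1 - mu2 / (L2 * ((n - tau).+1)%:R)) ^+ k)%:E
         * (Fobj f hi (x 0%N) - Fstar A c f hi))%E.
Proof.
move=> _ /andP[mt tn] df hconv L0 lip mu0 PL Ax0 hx0 xS dir.
have step := gsq_step mt tn df hconv L0 lip mu0 PL.
have feas j : A *m x j = c /\ hsep hi (x j) \is a fin_num.
  elim: j => [|j [Axj hxj]].
    by rewrite fin_numE hsep_neqNy ?lt_eqF // => i; case: (hconv i).
  by rewrite xS; case: (step _ _ _ Axj hxj (dir j)).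
have Fs_fin : Fstar A c f hi \is a fin_num.
  by have [Ax hx] := feas 0%N; case: (step _ _ _ Ax hx (dir 0%N)).
have eE j : (Fobj f hi (x j) - Fstar A c f hi
             = (fine (Fobj f hi (x j)) - fine (Fstar A c f hi))%:E)%E.
  by have [_ hx] := feas j; rewrite EFinB !fineK // Fobj_fin.
move=> k; rewrite !eE -EFinM lee_fin.
apply: (geometric_decay (e := fun j => fine (Fobj f hi (x j)) - fine (Fstar A c f hi))) => j.
  have [Ax hx] := feas j.
  by rewrite subr_ge0 (fine_le Fs_fin (Fobj_fin f hx) (Fstar_le_Fobj f hi Ax)).
by have [Ax hx] := feas j; rewrite xS; case: (step _ _ _ Ax hx (dir j)).
Qed.
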